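(* Let $\sigma_A>0$, let $A\in\mathbb R^{m\times d}$ have i.i.d. entries $A_{i,j}\sim\mathcal N(0,\sigma_A^2)$, let $b\in\mathbb R^m$, let $\phi(z)=\max\{z,0\}$ be the ReLU applied coordinatewise, and let $f(x)=\phi(Ax+b)$ for $x\in[0,1]^d$. Define the $\ell_1$ global sensitivity \[ \mathrm{GS}_1(f)=\sup\{\|f(x_1)-f(x_2)\|_1 : x_1,x_2\in[0,1]^d \text{ differ in at most one entry}\}. \] Then for any $\delta\in(0,1)$, \[ \Pr_A\Big[\mathrm{GS}_1(f)\le \sigma_A m+4\sigma_A\sqrt m\,\log^{1.5}(md/\delta)\Big]\ge 1-\delta . \]
   Context: $\|v\|_1=\sum_i|v_i|$. The probability is over the random matrix $A$. *)

From HB Require Import structures.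
From mathcomp Require Import all_boot all_order all_algebra.
From mathcomp Require Import all_classical all_reals all_analysis.
Set Implicit Arguments. Unset Strict Implicit. Unset Printing Implicit Defensive.
Import Order.TTheory GRing.Theory Num.Theory.
Local Open Scope classical_set_scope.
Local Open Scope ring_scope.

(* Mutual independence of a finite family of real random variables X k
   (k ranging over a finType I): the joint law of every choice of Borel sets
   factorizes.  (Taking B k = setT for unused indices covers all subfamilies.) *)
Definition mutually_independent_RVs {R : realType} {d : measure_display}
  {T : measurableType d} (P : probability T R) (I : finType) (X : I -> T -> R) :=
  forall B : I -> set R, (forall k, measurable (B k)) ->
    P (\bigcap_(k in [set: I]) (X k @^-1` B k)) = (\prod_(k : I) P (X k @^-1` B k))%E.

(* X has law N(0, s^2) (normal_prob takes mean and standard deviation). *)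
Definition is_normal_RV {R : realType} {d : measure_display}
  {T : measurableType d} (P : probability T R) (mu s : R) (X : T -> R) :=
  forall B : set R, measurable B -> P (X @^-1` B) = normal_prob mu s B.

Definition relu_layer {R : realType} (m d : nat) (A : 'I_m -> 'I_d -> R)
  (b : 'I_m -> R) (x : 'I_d -> R) : 'I_m -> R :=
  fun i => Num.max (\sum_(j < d) A i j * x j + b i) 0.

Definition unit_cube {R : realType} (d : nat) : set ('I_d -> R) :=
  [set x | forall j, 0 <= x j <= 1].

Definition differ_at_most_one {R : realType} (d : nat) (x1 x2 : 'I_d -> R) :=
  (#|[set j : 'I_d | x1 j != x2 j]| <= 1)%N.

Definition l1norm {R : realType} (m : nat) (v : 'I_m -> R) : R :=
  \sum_(i < m) `|v i|.

(* l1 global sensitivity of f over [0,1]^d (neighbouring = differ in <= 1 entry).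
   The set is bounded (f is Lipschitz on a compact set), so [sup] is the true sup. *)
Definition GS1 {R : realType} (m d : nat) (f : ('I_d -> R) -> ('I_m -> R)) : R :=
  sup [set r : R | exists x1 x2, unit_cube x1 /\ unit_cube x2 /\
        differ_at_most_one x1 x2 /\ r = l1norm (fun i => f x1 i - f x2 i)].

From HB Require Import structures.
From mathcomp Require Import all_boot all_order all_algebra.
From mathcomp Require Import all_classical all_reals all_analysis.
From mathcomp Require Import measurable_realfun ring lra.
Import Order.TTheory GRing.Theory Num.Theory.
Local Open Scope classical_set_scope.
Local Open Scope ring_scope.

(* Changing one coordinate x_j in [0,1] moves the i-th pre-activation by at
   most |A_ij| and the ReLU is 1-Lipschitz, so GS_1(f) is at most the largest
   l1 norm of a column of A.  By a union bound it suffices that a column exceeds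
   the bound with probability at most delta/d = m exp(-L), L = ln(md/delta).
   Since |a| <= s (a^2 / 2s^2) + s/2, a large column norm forces the chi-square
   sum Q = sum_i a_i^2 / 2s^2 to be large, and the Chernoff bound
   P(Q > c) exp(lam c) <= (1 - lam)^(-m/2) with a suitable lam in [0, 1/2]
   concludes.  Independence is only assumed for events, so the moment generating
   function of Q is reached through step functions approximating the weight
   exp(lam a^2 / 2s^2) from below.  For a single row and small L the bound comes
   instead from P(|a| <= s) >= 2/5. *)

Section measure_facts.
Context {d : measure_display} {T : measurableType d} {R : realType}.

Lemma measurable_gt_set (f : T -> R) (c : R) : measurable_fun setT f ->
  measurable [set x | c < f x].
Proof.
by move=> mf; rewrite -preimage_itvoy -[_ @^-1` _]setTI; exact: mf.
Qed.

Lemma measurable_ge_set (f : T -> R) (c : R) : measurable_fun setT f ->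
  measurable [set x | c <= f x].
Proof.
by move=> mf; rewrite -preimage_itvcy -[_ @^-1` _]setTI; exact: mf.
Qed.

Lemma integral_sum_indic (mu : measure T R) (K : finType) (w : K -> R)
    (F : K -> set T) (rho : T -> R) :
  (forall k, 0 <= w k) -> (forall k, measurable (F k)) ->
  measurable_fun setT rho -> (forall x, 0 <= rho x) ->
  (\int[mu]_x (\sum_k w k * \1_(F k) x * rho x)%:E =
   \sum_k (w k)%:E * \int[mu]_(x in F k) (rho x)%:E)%E.
Proof.
move=> w0 mF mrho rho0.
under eq_integral do rewrite -sumEFin.
rewrite ge0_integral_sum//; last first.
- by move=> k x _; rewrite lee_fin mulr_ge0 ?mulr_ge0 ?indic_ge0.
- move=> k; apply/measurable_EFinP; apply: measurable_funM => //.
  apply: measurable_funM => //; exact: measurable_indic.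
apply: eq_bigr => k _.
under eq_integral do rewrite -mulrA EFinM.
rewrite (ge0_integralZl mu measurableT); first last.
- by rewrite lee_fin.
- by move=> x _; rewrite lee_fin mulr_ge0 ?indic_ge0.
- apply/measurable_EFinP; apply: measurable_funM => //; exact: measurable_indic.
congr (_ * _)%E; rewrite [RHS]integral_mkcond; apply: eq_integral => x _.
by rewrite patchE indicE; case: (x \in F k); rewrite ?mul1r ?mul0r.
Qed.

Lemma le_measure_sum_indic (mu : measure T R) (G : set T) (c : R) (K : finType)
    (w : K -> R) (F : K -> set T) :
  measurable G -> 0 <= c -> (forall k, 0 <= w k) -> (forall k, measurable (F k)) ->
  (forall x, G x -> c <= \sum_k w k * \1_(F k) x) ->
  (c%:E * mu G <= \sum_k (w k)%:E * mu (F k))%E.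
Proof.
move=> mG c0 w0 mF c_le.
have integral_step (v : R) (E : set T) : 0 <= v -> measurable E ->
    (\int[mu]_x (\sum_(u : unit) v * \1_E x * 1)%:E = v%:E * mu E)%E.
  move=> v0 mE; rewrite (integral_sum_indic _ _ _ _ _ (fun=> v0) (fun=> mE)) //.
  by rewrite big_const card_unit /= adde0 integral_cst // mul1e.
have -> : (\sum_k (w k)%:E * mu (F k) =
    \int[mu]_x (\sum_k w k * \1_(F k) x * 1)%:E)%E.
  rewrite (integral_sum_indic _ _ _ _ _ w0 mF) //.
  by apply: eq_bigr => k _; rewrite integral_cst// mul1e.
rewrite -integral_step//; apply: ge0_le_integral => //.
- by move=> x _; rewrite lee_fin big_const card_unit /= addr0 !mulr1 mulr_ge0 ?indic_ge0.
- apply/measurable_EFinP; apply: measurable_sum => u.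
  by apply: measurable_funM => //; apply: measurable_funM => //; exact: measurable_indic.
- apply/measurable_EFinP; apply: measurable_sum => k.
  by apply: measurable_funM => //; apply: measurable_funM => //; exact: measurable_indic.
move=> x _; rewrite lee_fin big_const card_unit /= addr0 !mulr1.
under eq_bigr do rewrite mulr1.
rewrite indicE; have [xG|xNG] := boolP (x \in G).
  by rewrite mulr1; apply: c_le; rewrite -in_setE.
by rewrite mulr0 sumr_ge0// => k _; rewrite mulr_ge0 ?indic_ge0.
Qed.

End measure_facts.

Section real_probability.
Context {d : measure_display} {T : measurableType d} {R : realType}
  (P : probability T R).

Definition pr (A : set T) : R := fine (P A).

Lemma prE A : measurable A -> P A = (pr A)%:E.
Proof. by move=> mA; rewrite /pr fineK // fin_num_measure. Qed.

Lemma pr_ge0 A : 0 <= pr A.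
Proof. by rewrite /pr fine_ge0 // measure_ge0. Qed.

Lemma pr_le1 A : measurable A -> pr A <= 1.
Proof. by move=> mA; rewrite -lee_fin -prE // probability_le1. Qed.

Lemma pr_le A B : measurable A -> measurable B -> A `<=` B -> pr A <= pr B.
Proof. by move=> mA mB AB; rewrite -lee_fin -!prE // le_measure // inE. Qed.

Lemma prC A : measurable A -> pr (~` A) = 1 - pr A.
Proof.
move=> mA; apply: EFin_inj; rewrite EFinB -!prE ?probability_setC //.
exact: measurableC.
Qed.

Lemma pr_bigcup_le (I : finType) (F : I -> set T) : (forall i, measurable (F i)) ->
  pr (\bigcup_(i in [set: I]) F i) <= \sum_i pr (F i).
Proof.
move=> mF; have mU : measurable (\bigcup_(i in [set: I]) F i).
  by apply: fin_bigcup_measurable => //; exact: finite_setT.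
have cover x : (\bigcup_(i in [set: I]) F i) x -> 1 <= \sum_i 1 * \1_(F i) x :> R.
  move=> [i _ Fix]; rewrite (bigD1 i) //= mul1r indicE mem_set // lerDl.
  by rewrite sumr_ge0 // => k _; rewrite mul1r indic_ge0.
have le_sum := le_measure_sum_indic P _ _ _ _ _ mU ler01 (fun=> ler01) mF cover.
have sumE : (\sum_i 1%:E * P (F i) = (\sum_i pr (F i))%:E)%E.
  by rewrite -sumEFin; apply: eq_bigr => i _; rewrite mul1e prE.
rewrite -lee_fin -sumE -(prE _ mU) -[X in (X <= _)%E]mul1e; exact: le_sum.
Qed.

End real_probability.

Section real_inequalities.
Context {R : realType}.

Lemma expR_Nhalf_ge : 59/100 <= expR (- (1/2) : R).
Proof.
have -> : (- (1/2) : R) = 8%:R * (- (1/16)) by field.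
rewrite expRM_natl.
have := expR_ge1Dx (- (1/16) : R); move: (expR _) => a a_ge.
have a2 : 8789/10000 <= a ^+ 2 by rewrite expr2; nra.
have a4 : 7724/10000 <= a ^+ 2 * a ^+ 2 by nra.
have -> : a ^+ 8 = (a ^+ 2 * a ^+ 2) * (a ^+ 2 * a ^+ 2) by rewrite -!exprD.
nra.
Qed.

Lemma powR32 (L : R) : 0 <= L -> powR L (3 / 2) = L * Num.sqrt L.
Proof.
move=> L0; have [->|L_neq0] := eqVneq L 0; first by rewrite powR0 ?mul0r.
have -> : (3 / 2 : R) = 1 + 2^-1 by field.
by rewrite powRD ?L_neq0 ?implybT // powRr1 // powR12_sqrt.
Qed.

Lemma invsqrt1B_le_expR (lam : R) : 0 <= lam <= 1/2 ->
  (Num.sqrt (1 - lam))^-1 <= expR (lam / 2 + lam ^+ 2).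
Proof.
move=> /andP[l0 l1].
have q0 : 0 < Num.sqrt (1 - lam) by rewrite sqrtr_gt0; lra.
have q2 : Num.sqrt (1 - lam) ^+ 2 = 1 - lam by rewrite sqr_sqrtr //; lra.
move: (Num.sqrt (1 - lam)) q0 q2 => q q0 q2.
set e := expR (lam / 2 + lam ^+ 2).
have e2 : e ^+ 2 = expR lam * expR (2 * lam ^+ 2).
  by rewrite /e -expRM_natl -expRD; congr expR; field.
have e2_ge : (1 + lam) * (1 + 2 * lam ^+ 2) <= e ^+ 2.
  rewrite e2; apply: ler_pM; rewrite ?expR_ge1Dx //; first lra.
  by rewrite addr_ge0 // mulr_ge0 // sqr_ge0.
have qe : 1 <= q * e.
  have : 0 <= q * e by rewrite mulr_ge0 // ltW // expR_gt0.
  have : 1 <= (q * e) ^+ 2.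
    rewrite exprMn q2; apply: le_trans (ler_wpM2l _ e2_ge); last lra.
    have : lam ^+ 2 <= 1/4 by nra.
    nra.
  nra.
by rewrite -(ler_pM2l q0) mulfV ?gt_eqF.
Qed.

Lemma bernoulli_ineq (x : R) (m : nat) : 0 <= x <= 1 ->
  1 - m%:R * x <= (1 - x) ^+ m.
Proof.
move=> /andP[x0 x1]; elim: m => [|m IH]; first by rewrite expr0 mul0r subr0.
rewrite exprS -natr1.
have : (1 - x) * (1 - m%:R * x) <= (1 - x) * (1 - x) ^+ m.
  by rewrite ler_wpM2l // subr_ge0.
have : 0 <= (m%:R : R) * x ^+ 2 by rewrite mulr_ge0 ?sqr_ge0.
nra.
Qed.

Lemma ler_of_forall_pow1Bn (a b : R) (m : nat) : 0 <= a ->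
  (forall n, (0 < n)%N -> a * (1 - n%:R^-1) ^+ m <= b) -> a <= b.
Proof.
move=> a0 le_ab; apply/ler_addgt0Pr => e e0.
pose n := (Num.truncn (a * m%:R / e)).+1.
have n0 : (0 : R) < n%:R by rewrite ltr0n.
have : a * m%:R / e < n%:R by exact: truncnS_gt.
rewrite ltr_pdivrMr // => n_gt.
have small : a * m%:R / n%:R <= e by rewrite ler_pdivrMr //; lra.
have n_inv : 0 <= (n%:R : R)^-1 <= 1 by rewrite invr_ge0 ltW //= invf_le1 // ler1n.
have := ler_wpM2l a0 (bernoulli_ineq _ m n_inv).
have := le_ab n isT.
rewrite -mulrA in small; nra.
Qed.

Lemma natr_mul_expR_Nln (m d : nat) (delta : R) :
  0 < delta -> (0 < d)%N ->
  m%:R * expR (- ln ((m * d)%:R / delta)) <= delta / d%:R.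
Proof.
move=> delta0 d0; have [->|m0] := posnP m; first by rewrite mul0r divr_ge0 ?ler0n // ltW.
have x0 : 0 < (m * d)%:R / delta by rewrite divr_gt0 // ltr0n muln_gt0 m0 d0.
rewrite expRN lnK ?posrE // invf_div natrM.
suff -> : m%:R * (delta / (m%:R * d%:R)) = delta / d%:R by [].
by field; rewrite !pnatr_eq0 -!lt0n m0 d0.
Qed.

End real_inequalities.

Section normal_facts.
Context {R : realType}.
Notation mu := (@lebesgue_measure R).

Lemma normal_peak_div (s q : R) : 0 < s -> 0 < q ->
  normal_peak (s / q) = q * normal_peak s.
Proof.
move=> s0 q0; rewrite /normal_peak.
have pi0 := @pi_ge0 R; move: (@pi R) pi0 => p p0.
have -> : (s / q) ^+ 2 * p *+ 2 = (Num.sqrt (s ^+ 2 * p *+ 2) / q) ^+ 2.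
  rewrite [RHS]expr_div_n sqr_sqrtr ?expr_div_n; first ring.
  by apply: mulrn_wge0; rewrite mulr_ge0 ?sqr_ge0.
rewrite sqrtr_sqr ger0_norm; last by rewrite divr_ge0 ?sqrtr_ge0 ?ltW.
by rewrite invf_div mulrC.
Qed.

(* The weight expR (lam x^2 / 2 s^2) turns the N(0, s^2) density into
   (1 - lam)^(-1/2) times the N(0, s^2 / (1 - lam)) density. *)
Lemma integral_expR_sqr_normal_pdf (s lam : R) : 0 < s -> 0 <= lam < 1 ->
  (\int[mu]_x (expR (lam * x ^+ 2 / (s ^+ 2 *+ 2)) * normal_pdf 0 s x)%:E
   = ((Num.sqrt (1 - lam))^-1)%:E)%E.
Proof.
move=> s0 /andP[l0 l1].
have q0 : 0 < Num.sqrt (1 - lam) by rewrite sqrtr_gt0 subr_gt0.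
have q2 : Num.sqrt (1 - lam) ^+ 2 = 1 - lam by rewrite sqr_sqrtr // subr_ge0 ltW.
move: (Num.sqrt (1 - lam)) q0 q2 => q q0 q2.
have density_scale x : expR (lam * x ^+ 2 / (s ^+ 2 *+ 2)) * normal_pdf 0 s x
    = q^-1 * normal_pdf 0 (s / q) x.
  have exponent : lam * x ^+ 2 / (s ^+ 2 *+ 2) + - (x - 0) ^+ 2 / (s ^+ 2 *+ 2)
      = - (x - 0) ^+ 2 / ((s / q) ^+ 2 *+ 2).
    have -> : lam = 1 - q ^+ 2 by rewrite q2; ring.
    by rewrite subr0; field; rewrite !gt_eqF.
  rewrite /normal_pdf !gt_eqF ?divr_gt0 // normal_peak_div // /normal_fun.
  by rewrite -exponent expRD mulrCA !mulrA mulVf ?gt_eqF // mul1r.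
under eq_integral do rewrite density_scale EFinM.
rewrite integralZl //; last exact: integrable_normal_pdf.
by rewrite integral_normal_pdf mule1.
Qed.

Lemma normal_prob_step_le (s : R) (K : finType) (w : K -> R) (B : K -> set R)
    (g : R -> R) :
  (forall k, 0 <= w k) -> (forall k, measurable (B k)) ->
  measurable_fun setT g -> (forall y, 0 <= g y) ->
  (forall y, \sum_k w k * \1_(B k) y <= g y) ->
  (\sum_k (w k)%:E * normal_prob 0 s (B k) <=
   \int[mu]_x (g x * normal_pdf 0 s x)%:E)%E.
Proof.
move=> w0 mB mg g0 step_le.
rewrite /normal_prob -integral_sum_indic //; last first.
- exact: normal_pdf_ge0.
- exact: measurable_normal_pdf.
apply: ge0_le_integral => //.
- move=> x _; rewrite lee_fin sumr_ge0 // => k _.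
  by rewrite !mulr_ge0 ?indic_ge0 ?normal_pdf_ge0.
- apply/measurable_EFinP; apply: measurable_sum => k.
  apply: measurable_funM; last exact: measurable_normal_pdf.
  by apply: measurable_funM => //; exact: measurable_indic (mB k).
- apply/measurable_EFinP; apply: measurable_funM => //.
  exact: measurable_normal_pdf.
by move=> x _; rewrite lee_fin -mulr_suml ler_wpM2r ?normal_pdf_ge0.
Qed.

(* The density is at least normal_peak s * expR (-1/2) on [-s, s], and
   2 s normal_peak s = 2 / sqrt (2 pi) > 2/5 / 0.59. *)
Lemma normal_prob_itv_ge (s : R) : 0 < s ->
  ((2/5)%:E <= normal_prob 0 s `[(- s)%R, s]%classic)%E.
Proof.
move=> s0; set c := normal_peak s * (59/100).
have peak0 : 0 < normal_peak s by rewrite normal_peak_gt0 // gt_eqF.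
have peakE : normal_peak s = (s * Num.sqrt (pi *+ 2))^-1.
  by rewrite /normal_peak -mulrnAr sqrtrM ?sqr_ge0 // sqrtr_sqr ger0_norm // ltW.
have sqrt2pi_le : Num.sqrt (pi *+ 2) <= 59/20 :> R.
  have pi4 : pi < 4 :> R by have := @pihalf_lt2 R; lra.
  have -> : 59/20 = Num.sqrt ((59/20) ^+ 2) :> R by rewrite sqrtr_sqr ger0_norm.
  by rewrite ler_sqrt ?sqr_ge0 // -mulr_natr; lra.
have sqrt2pi_gt0 : 0 < Num.sqrt (pi *+ 2) :> R.
  by rewrite sqrtr_gt0 pmulrn_lgt0 // pi_gt0.
have c_mass : 2/5 <= c * (2 * s).
  have -> : c * (2 * s) = (59/50) / Num.sqrt (pi *+ 2).
    by rewrite /c peakE; field; rewrite !gt_eqF.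
  by rewrite ler_pdivlMr //; lra.
apply: (@le_trans _ _ (c * (2 * s))%:E); first by rewrite lee_fin.
have -> : (c * (2 * s))%:E = (\int[mu]_(x in `[(- s)%R, s]%classic) (cst c%:E) x)%E.
  rewrite integral_cst //= lebesgue_measure_itv /= lte_fin.
  by rewrite (_ : - s < s) -?EFinD -?EFinM; [congr EFin; ring | lra].
rewrite /normal_prob; apply: ge0_le_integral => //.
- by move=> x _; rewrite lee_fin /c mulr_ge0 // ltW.
- by apply/measurable_EFinP; apply: measurable_funTS; exact: measurable_normal_pdf.
move=> x; rewrite /= in_itv /= => /andP[x_ge x_le].
rewrite lee_fin /normal_pdf gt_eqF // /c; apply: ler_wpM2l; first exact: ltW.
apply: le_trans expR_Nhalf_ge _; rewrite /normal_fun ler_expR subr0.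
rewrite mulNr lerN2 ler_pdivrMr; last by rewrite pmulrn_lgt0 // exprn_gt0.
have : x ^+ 2 <= s ^+ 2 by rewrite !expr2; nra.
rewrite -mulr_natr; lra.
Qed.

End normal_facts.

Section step_approximation.
Context {R : realType}.

Definition step_count (N : nat) (x : R) : R :=
  \sum_(k < N) (if k.+1%:R <= x then 1 else 0).

Lemma step_countP (N : nat) (x : R) : 0 <= x ->
  [/\ step_count N x <= x, (x <= N%:R -> x - 1 <= step_count N x) &
      (N%:R <= x -> step_count N x = N%:R)].
Proof.
rewrite /step_count => x0; elim: N => [|N [IH1 IH2 IH3]].
  by rewrite big_ord0; split => // h; lra.
rewrite big_ord_recr /=; set s := \sum_(i < N) _.
have NS : (N.+1%:R : R) = N%:R + 1 by rewrite natr1.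
have [xN|Nx] := lerP N.+1%:R x.
  have -> : s = N%:R by apply: IH3; lra.
  by split => *; lra.
rewrite addr0; split; [exact: IH1 | | by lra].
move=> _; have [xN'|Nx'] := lerP x N%:R; first exact: IH2.
have -> : s = N%:R by apply: IH3; lra.
lra.
Qed.

Lemma scaled_step_count_bounds (n N : nat) (y : R) : (0 < n)%N -> 1 <= y ->
  n%:R^-1 * step_count N (n%:R * y) <= y /\
  (1 - n%:R^-1) * Num.min y (n%:R^-1 * N%:R) <= n%:R^-1 * step_count N (n%:R * y).
Proof.
move=> n0 y1; have nR : 0 < (n%:R : R) by rewrite ltr0n.
have [S1 S2 S3] := step_countP N (n%:R * y) (mulr_ge0 (ltW nR) (le_trans ler01 y1)).
move: S1 S2 S3; set s := step_count _ _ => S1 S2 S3.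
have wn : n%:R^-1 * n%:R = 1 :> R by rewrite mulVf ?gt_eqF.
have w0 : 0 < (n%:R : R)^-1 by rewrite invr_gt0.
have w1 : (n%:R : R)^-1 <= 1 by rewrite invf_le1 // ler1n.
move: wn w0 w1; set w := (n%:R : R)^-1 => wn w0 w1.
split.
  by rewrite -[leRHS]mul1r -wn -mulrA ler_wpM2l // ltW.
have [nyN|Nny] := lerP (n%:R * y) N%:R.
  have : w * (n%:R * y - 1) <= w * s by rewrite ler_wpM2l ?S2 // ltW.
  rewrite mulrBr mulrA wn mul1r mulr1.
  have : Num.min y (w * N%:R) <= y by rewrite ge_min lexx.
  nra.
rewrite S3; last exact: ltW.
have min_le : Num.min y (w * N%:R) <= w * N%:R by rewrite ge_min lexx orbT.
have w1' : 0 <= 1 - w by lra.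
apply: le_trans (ler_wpM2l w1' min_le) _.
have : 0 <= w * N%:R by rewrite mulr_ge0 // ltW.
nra.
Qed.

Lemma min_prod_le_prod_min (I : finType) (a : I -> R) (K : R) :
  1 <= K -> (forall i, 1 <= a i) ->
  Num.min (\prod_i a i) K <= \prod_i Num.min (a i) K.
Proof.
move=> K1 a1.
pose P (y1 y2 : R) := [/\ 1 <= y1, 1 <= y2 & Num.min y1 K <= y2].
suff [] : P (\prod_i a i) (\prod_i Num.min (a i) K) by [].
apply: (big_rec2 P); first by split => //; rewrite ge_min lexx.
move=> i y1 y2 _ [y1_ge1 y2_ge1 le_y12]; have := a1 i; move: (a i) => x x1.
have m1 : 1 <= Num.min x K by rewrite le_min x1 K1.
split; [nra | nra |].
have [xK|Kx] := leP x K; last by rewrite ge_min; apply/orP; right; nra.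
move: le_y12; have [y1K|Ky1] := leP y1 K => le_y12.
  by rewrite ge_min; apply/orP; left; nra.
by rewrite ge_min; apply/orP; right; nra.
Qed.

Lemma prod_step_count_ge (m n N : nat) (a : 'I_m -> R) (K : R) : (0 < n)%N ->
  (forall i, 1 <= a i) -> K <= \prod_i a i ->
  K <= n%:R^-1 * N%:R -> 1 <= n%:R^-1 * N%:R :> R ->
  (1 - n%:R^-1) ^+ m * K <= \prod_i (n%:R^-1 * step_count N (n%:R * a i)).
Proof.
move=> n0 a1 K_le K_leN N_ge1.
have w1 : (n%:R : R)^-1 <= 1 by rewrite invf_le1 ?ltr0n // ler1n.
apply: le_trans (_ : \prod_i ((1 - n%:R^-1) * Num.min (a i) (n%:R^-1 * N%:R)) <= _).
  rewrite big_split /= prodr_const card_ord; apply: ler_wpM2l.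
    by rewrite exprn_ge0 // subr_ge0.
  apply: le_trans (min_prod_le_prod_min _ _ _ N_ge1 a1).
  by rewrite le_min K_le K_leN.
apply: ler_prod => i _; rewrite (scaled_step_count_bounds n N (a i) n0 (a1 i)).2 andbT.
by rewrite mulr_ge0 ?subr_ge0 // le_min (le_trans ler01 (a1 i)) (le_trans ler01 N_ge1).
Qed.

End step_approximation.

Section independence.
Context {d : measure_display} {T : measurableType d} {R : realType}
  (P : probability T R).

Lemma mutually_independent_RVs_col (I J : finType) (X : I * J -> T -> R) (j : J) :
  mutually_independent_RVs P X -> mutually_independent_RVs P (fun i => X (i, j)).
Proof.
move=> indep C mC.
pose C' (ij : I * J) := if ij.2 == j then C ij.1 else setT.
have mC' ij : measurable (C' ij) by rewrite /C'; case: ifP.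
have := indep C' mC'.
have -> : \bigcap_(ij in [set: I * J]) (X ij @^-1` C' ij) =
    \bigcap_(i in [set: I]) (X (i, j) @^-1` C i).
  apply/seteqP; split => x /= Cx.
    by move=> i _; have := Cx (i, j) Logic.I; rewrite /C' /= eqxx.
  by move=> [i j'] _; rewrite /C' /=; case: eqP => [->|_] //; exact: Cx.
move=> ->.
rewrite (eq_bigr (fun p => P (X (p.1, p.2) @^-1` C' (p.1, p.2)))); last by case.
rewrite -(pair_bigA _ (fun i j' => P (X (i, j') @^-1` C' (i, j')))) /=.
apply: eq_bigr => i _; rewrite (bigD1 j) //= /C' /= eqxx big1 ?mule1 // => j' /negPf ->.
by rewrite preimage_setT probability_setT.
Qed.

Lemma prod_indic_bigcap (I : finType) (X : I -> T -> R) (C : I -> set R) (x : T) :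
  \prod_i \1_(C i) (X i x) = \1_(\bigcap_(i in [set: I]) (X i @^-1` C i)) x :> R.
Proof.
have [allC|] := pselect (forall i, C i (X i x)).
  rewrite big1 => [|i _]; last by rewrite indicE mem_set.
  by rewrite indicE mem_set // => i _; exact: allC.
move=> /existsNP[i0 notC]; rewrite (bigD1 i0) //= indicE memNset // mul0r.
by rewrite indicE memNset // => /(_ i0 Logic.I).
Qed.

(* Expanding the product gives a step function over the events
   \bigcap_i X i @^-1` B (f i), f : I -> K, whose probabilities factorize. *)
Lemma pr_le_prod_step (I K : finType) (X : I -> T -> R) (v : K -> R)
    (B : K -> set R) (G : set T) (c : R) :
  mutually_independent_RVs P X -> (forall i, measurable_fun setT (X i)) ->
  (forall k, 0 <= v k) -> (forall k, measurable (B k)) -> measurable G -> 0 <= c ->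
  (forall x, G x -> c <= \prod_i \sum_k v k * \1_(B k) (X i x)) ->
  c * pr P G <= \prod_i \sum_k v k * pr P (X i @^-1` B k).
Proof.
move=> indep mX v0 mB mG c0 c_le.
pose F (f : {ffun I -> K}) := \bigcap_(i in [set: I]) (X i @^-1` B (f i)).
have mpre i k : measurable (X i @^-1` B k) by rewrite -[_ @^-1` _]setTI; exact: mX.
have mF f : measurable (F f) by apply: fin_bigcap_measurable => // i _.
have expand x : \prod_i \sum_k v k * \1_(B k) (X i x) =
    \sum_(f : {ffun I -> K}) (\prod_i v (f i)) * \1_(F f) x.
  by rewrite bigA_distr_bigA; apply: eq_bigr => f _; rewrite big_split prod_indic_bigcap.
have vf0 (f : {ffun I -> K}) : 0 <= \prod_i v (f i) by exact: prodr_ge0.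
have c_le' x : G x -> c <= \sum_(f : {ffun I -> K}) (\prod_i v (f i)) * \1_(F f) x.
  by rewrite -expand; exact: c_le.
have le_sum := le_measure_sum_indic P _ _ _ _ _ mG c0 vf0 mF c_le'.
have PF f : P (F f) = (\prod_i pr P (X i @^-1` B (f i)))%:E.
  by rewrite indep // -prodEFin; apply: eq_bigr => i _; exact: prE.
have sumE : (\sum_(f : {ffun I -> K}) (\prod_i v (f i))%:E * P (F f) =
    (\sum_(f : {ffun I -> K}) \prod_i v (f i) * \prod_i pr P (X i @^-1` B (f i)))%:E)%E.
  by rewrite -sumEFin; apply: eq_bigr => f _; rewrite PF EFinM.
have prodE : \sum_(f : {ffun I -> K}) \prod_i v (f i) * \prod_i pr P (X i @^-1` B (f i))
    = \prod_i \sum_k v k * pr P (X i @^-1` B k).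
  by rewrite bigA_distr_bigA; apply: eq_bigr => f _; rewrite big_split.
rewrite -prodE -lee_fin EFinM -(prE P G mG) -sumE; exact: le_sum.
Qed.

Lemma pr_normal_step_le (s lam : R) (Y : T -> R) (K : finType) (v : K -> R)
    (B : K -> set R) :
  0 < s -> 0 <= lam < 1 -> measurable_fun setT Y -> is_normal_RV P 0 s Y ->
  (forall k, 0 <= v k) -> (forall k, measurable (B k)) ->
  (forall y, \sum_k v k * \1_(B k) y <= expR (lam * y ^+ 2 / (s ^+ 2 *+ 2))) ->
  \sum_k v k * pr P (Y @^-1` B k) <= (Num.sqrt (1 - lam))^-1.
Proof.
move=> s0 lam01 mY nY v0 mB step_le.
rewrite -lee_fin -(integral_expR_sqr_normal_pdf _ _ s0 lam01) -sumEFin.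
have mpre k : measurable (Y @^-1` B k) by rewrite -[_ @^-1` _]setTI; exact: mY.
have probE k : ((v k * pr P (Y @^-1` B k))%:E = (v k)%:E * normal_prob 0 s (B k))%E.
  by rewrite EFinM -(prE P _ (mpre k)) nY.
rewrite (eq_bigr _ (fun k _ => probE k)).
apply: normal_prob_step_le => //.
apply: measurableT_comp => //; apply: measurable_funM => //.
by apply: measurable_funM => //; exact: measurable_funX.
Qed.

End independence.

Section chernoff.
Context {d : measure_display} {T : measurableType d} {R : realType}
  (P : probability T R) (m : nat) (X : 'I_m -> T -> R) (s : R).
Hypotheses (s0 : 0 < s) (mX : forall i, measurable_fun setT (X i))
  (nX : forall i, is_normal_RV P 0 s (X i)) (indep : mutually_independent_RVs P X).

(* The weight expR (lam y^2 / 2 s^2) is approximated from below by a step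
   function with steps of height 1/n, truncated at a level N above expR (lam c);
   the relative loss (1 - 1/n) per coordinate vanishes as n grows. *)
Lemma chernoff_sum_sqr_step (lam c : R) (n : nat) : 0 <= lam < 1 -> (0 < n)%N ->
  pr P [set x | c < \sum_i X i x ^+ 2 / (s ^+ 2 *+ 2)] *
    ((1 - n%:R^-1) ^+ m * expR (lam * c)) <= (Num.sqrt (1 - lam))^-1 ^+ m.
Proof.
move=> lam01 n0; have /andP[lam0 _] := lam01.
pose g y := expR (lam * y ^+ 2 / (s ^+ 2 *+ 2)).
have g_ge1 y : 1 <= g y.
  apply: le_trans (expR_ge1Dx _); rewrite lerDl.
  apply: divr_ge0; first by rewrite mulr_ge0 // sqr_ge0.
  by rewrite mulrn_wge0 // sqr_ge0.
have mg : measurable_fun setT g.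
  apply: measurableT_comp => //; apply: measurable_funM => //.
  by apply: measurable_funM => //; exact: measurable_funX.
have nR : 0 < (n%:R : R) by rewrite ltr0n.
pose N := (n * (Num.truncn (expR (lam * c))).+1)%N.
have N_gt : expR (lam * c) < n%:R^-1 * N%:R.
  by rewrite natrM mulKf ?gt_eqF //; exact: truncnS_gt.
have N_ge1 : 1 <= n%:R^-1 * N%:R :> R.
  by rewrite natrM mulKf ?gt_eqF // ler1n.
pose B (k : 'I_N) := [set y | k.+1%:R <= n%:R * g y].
have mB k : measurable (B k) by apply: measurable_ge_set; exact: measurable_funM.
have stepE y : \sum_k n%:R^-1 * \1_(B k) y = n%:R^-1 * step_count N (n%:R * g y).
  rewrite /step_count mulr_sumr; apply: eq_bigr => k _; congr (_ * _).
  rewrite indicE; case: ifPn => h; first by rewrite mem_set.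
  by rewrite memNset //=; apply/negP.
set G := [set x | _ < _].
have mG : measurable G.
  apply: measurable_gt_set; apply: measurable_sum => i.
  by apply: measurable_funM => //; exact: measurable_funX.
have c_le x : G x -> (1 - n%:R^-1) ^+ m * expR (lam * c) <=
    \prod_i \sum_k n%:R^-1 * \1_(B k) (X i x).
  move=> Gx; under eq_bigr do rewrite stepE.
  apply: prod_step_count_ge => //; last exact: ltW.
  rewrite /g -expR_sum ler_expR; under eq_bigr do rewrite -mulrA.
  by rewrite -mulr_sumr ler_wpM2l // ltW.
have c0 : 0 <= (1 - n%:R^-1) ^+ m * expR (lam * c).
  by rewrite mulr_ge0 ?expR_ge0 // exprn_ge0 // subr_ge0 invf_le1 // ler1n.
have w0 (k : 'I_N) : 0 <= n%:R^-1 :> R by rewrite invr_ge0 ltW.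
have := pr_le_prod_step P _ _ _ _ _ _ _ indep mX w0 mB mG c0 c_le.
rewrite mulrC => /le_trans; apply.
rewrite -[m in X in _ <= X]card_ord -prodr_const; apply: ler_prod => i _.
rewrite sumr_ge0 => [|k _]; last by rewrite mulr_ge0 ?pr_ge0.
apply: (pr_normal_step_le P _ _ _ _ _ _ s0 lam01 (mX i) (nX i) w0 mB) => y.
by rewrite stepE (scaled_step_count_bounds _ _ _ n0 (g_ge1 y)).1.
Qed.

Lemma chernoff_sum_sqr (lam c : R) : 0 <= lam < 1 ->
  pr P [set x | c < \sum_i X i x ^+ 2 / (s ^+ 2 *+ 2)] * expR (lam * c)
    <= (Num.sqrt (1 - lam))^-1 ^+ m.
Proof.
move=> lam01; apply: ler_of_forall_pow1Bn => [|n n0].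
  by rewrite mulr_ge0 ?pr_ge0 ?expR_ge0.
by rewrite -mulrA [expR _ * _]mulrC; apply: chernoff_sum_sqr_step.
Qed.

Lemma chernoff_sum_sqr_tail (lam c : R) : 0 <= lam <= 1/2 ->
  pr P [set x | c < \sum_i X i x ^+ 2 / (s ^+ 2 *+ 2)]
    <= expR (m%:R * (lam / 2 + lam ^+ 2) - lam * c).
Proof.
move=> lam_half; have /andP[lam0 lam1] := lam_half.
have lam01 : 0 <= lam < 1 by rewrite lam0 /=; lra.
rewrite expRB ler_pdivlMr ?expR_gt0 //.
apply: le_trans (chernoff_sum_sqr _ _ lam01) _.
rewrite expRM_natl lerXn2r ?nnegrE ?expR_ge0 ?invr_ge0 ?sqrtr_ge0 //.
exact: invsqrt1B_le_expR.
Qed.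

End chernoff.

Section tail_inequalities.
Context {R : realType}.

Lemma normr_le_sqr (s x : R) : 0 < s ->
  `|x| <= s * (x ^+ 2 / (s ^+ 2 *+ 2)) + s / 2.
Proof.
move=> s0; have -> : s * (x ^+ 2 / (s ^+ 2 *+ 2)) + s / 2 = (x ^+ 2 + s ^+ 2) / (2 * s).
  by field; rewrite gt_eqF.
rewrite ler_pdivlMr ?mulr_gt0 //.
have := sqr_ge0 (`|x| - s); have : `|x| ^+ 2 = x ^+ 2 by rewrite real_normK ?num_real.
nra.
Qed.

Lemma sum_normr_le_sum_sqr (m : nat) (x : 'I_m -> R) (s : R) : 0 < s ->
  \sum_i `|x i| <= s * (\sum_i x i ^+ 2 / (s ^+ 2 *+ 2)) + s * m%:R / 2.
Proof.
move=> s0; apply: le_trans (ler_sum _ (fun i _ => normr_le_sqr s (x i) s0)) _.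
rewrite big_split /= sumr_const card_ord -mulr_sumr lerD2l.
by rewrite -[s / 2 *+ m]mulr_natr mulrAC.
Qed.

Lemma chernoff_exponent_le (m L : R) : 0 < m -> 1/2 <= L -> 1 <= m * L ->
  exists2 lam, 0 <= lam <= 1/2 &
    m * lam ^+ 2 - lam * (4 * Num.sqrt m * (L * Num.sqrt L)) <= - L.
Proof.
move=> m0 L_ge mL_ge.
have sm2 : Num.sqrt m ^+ 2 = m by rewrite sqr_sqrtr // ltW.
have r2 : Num.sqrt L ^+ 2 = L by rewrite sqr_sqrtr //; lra.
have := sqrtr_ge0 m; have := sqrtr_ge0 L.
move: (Num.sqrt m) (Num.sqrt L) sm2 r2 => sm r sm2 r2 r0 sm0.
set tau := 4 * sm * (L * r).
have [tau_le|tau_gt] := lerP tau m.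
  exists (tau / (2 * m)).
    by rewrite divr_ge0 ?mulr_ge0 //= ?ler_pdivrMr; lra.
  have -> : m * (tau / (2 * m)) ^+ 2 - tau / (2 * m) * tau = - (tau ^+ 2 / (4 * m)).
    by field; rewrite gt_eqF.
  have -> : tau ^+ 2 = 16 * m * (L ^+ 2 * L) by rewrite /tau -sm2 -r2; ring.
  have -> : 16 * m * (L ^+ 2 * L) / (4 * m) = 4 * L ^+ 3 by field; rewrite gt_eqF.
  rewrite lerN2 exprS; have : 1 <= 4 * L ^+ 2 by nra.
  nra.
exists (1/2); first lra.
have smr : 1 <= sm * r.
  have : 1 <= (sm * r) ^+ 2 by rewrite exprMn sm2 r2.
  have : 0 <= sm * r by rewrite mulr_ge0.
  nra.
have : 4 * L <= tau by rewrite /tau; nra.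
lra.
Qed.

Lemma single_tail_exponent_ge (L : R) : 2/5 <= L ->
  1 + L <= 3/4 * ((1 + 4 * (L * Num.sqrt L)) ^+ 2 / 2).
Proof.
move=> L_ge; have r2 : Num.sqrt L ^+ 2 = L by rewrite sqr_sqrtr //; lra.
have := sqrtr_ge0 L; move: (Num.sqrt L) r2 => r r2 r0.
have r_ge : 63/100 <= r by nra.
have v_ge : 63/100 * L <= L * r by nra.
have v2_ge : 16/100 * L <= (L * r) ^+ 2 by rewrite exprMn r2; nra.
move: (L * r) v_ge v2_ge => v v_ge v2_ge.
nra.
Qed.

End tail_inequalities.

Section column_tail.
Context {d : measure_display} {T : measurableType d} {R : realType}
  (P : probability T R).

Lemma measurable_sum_normr (I : finType) (X : I -> T -> R) :
  (forall i, measurable_fun setT (X i)) ->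
  measurable_fun setT (fun x => \sum_i `|X i x|).
Proof.
move=> mX; apply: measurable_sum => i.
exact: measurableT_comp (@normr_measurable R setT) (mX i).
Qed.

Lemma mutually_independent_RVs_ord1 (Y : T -> R) :
  mutually_independent_RVs P (fun _ : 'I_1 => Y).
Proof.
move=> B _; rewrite big_ord1; congr (P _); apply/seteqP; split => x /=.
  by move/(_ ord0 Logic.I).
by move=> Bx i _; rewrite (ord1 i).
Qed.

Lemma single_tail_small (Y : T -> R) (s L : R) :
  0 < s -> measurable_fun setT Y -> is_normal_RV P 0 s Y -> 0 <= L <= 2/5 ->
  pr P [set x | s + 4 * s * (L * Num.sqrt L) < `|Y x|] <= expR (- L).
Proof.
move=> s0 mY nY /andP[L0 L_le].
have mI : measurable (Y @^-1` `[- s, s]).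
  by rewrite -[_ @^-1` _]setTI; exact: mY.
apply: le_trans (pr_le P _ _ _ (measurableC mI) _) _.
- exact/measurable_gt_set/measurableT_comp.
- move=> x /= lt_Y; rewrite in_itv /= -ler_norml => Y_le.
  have : 0 <= 4 * s * (L * Num.sqrt L) by rewrite !mulr_ge0 ?sqrtr_ge0 // ltW.
  lra.
have : 2/5 <= pr P (Y @^-1` `[- s, s]).
  by rewrite -lee_fin -prE // nY //; exact: normal_prob_itv_ge.
have := expR_ge1Dx (- L); rewrite prC //; lra.
Qed.

Lemma single_tail_large (Y : T -> R) (s L : R) :
  0 < s -> measurable_fun setT Y -> is_normal_RV P 0 s Y -> 2/5 <= L ->
  pr P [set x | s + 4 * s * (L * Num.sqrt L) < `|Y x|] <= expR (- L).
Proof.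
move=> s0 mY nY L_ge.
set S := 1 + 4 * (L * Num.sqrt L).
have S0 : 0 <= S by rewrite /S addr_ge0 // !mulr_ge0 ?sqrtr_ge0 //; lra.
set G := [set x | S ^+ 2 / 2 < \sum_(i < 1) Y x ^+ 2 / (s ^+ 2 *+ 2)].
have mG : measurable G.
  apply: measurable_gt_set; apply: measurable_sum => _.
  by apply: measurable_funM => //; exact: measurable_funX.
apply: le_trans (pr_le P _ _ _ mG _) _.
- exact/measurable_gt_set/measurableT_comp.
- move=> x /= lt_Y; rewrite /G /= big_ord1.
  have sS_lt : s * S < `|Y x| by rewrite /S; lra.
  have : (s * S) ^+ 2 < Y x ^+ 2.
    rewrite -[Y x ^+ 2]real_normK ?num_real // ltr_pXn2r ?nnegrE //.
    by rewrite mulr_ge0 // ltW.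
  rewrite exprMn => lt_sq.
  have -> : Y x ^+ 2 / (s ^+ 2 *+ 2) = Y x ^+ 2 / s ^+ 2 / 2.
    by field; rewrite gt_eqF.
  by rewrite ltr_pM2r ?invr_gt0 // ltr_pdivlMr ?exprn_gt0 // mulrC.
have lam01 : 0 <= (3/4 : R) < 1 by lra.
have := chernoff_sum_sqr P _ (fun _ : 'I_1 => Y) _ s0 (fun=> mY) (fun=> nY)
  (mutually_independent_RVs_ord1 Y) _ (S ^+ 2 / 2) lam01.
have -> : Num.sqrt (1 - 3/4) = 1/2 :> R.
  by rewrite (_ : 1 - 3/4 = (1/2) ^+ 2) ?sqrtr_sqr ?ger0_norm //; lra.
rewrite expr1 (_ : (1/2)^-1 = 2 :> R); last by field.
have : expR 1 * expR L <= expR (3/4 * (S ^+ 2 / 2)).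
  by rewrite -expRD ler_expR; exact: single_tail_exponent_ge.
move=> exp_le pr_le2; rewrite expRN -(ler_pM2r (expR_gt0 L)) mulVf ?gt_eqF ?expR_gt0 //.
have pr0 := pr_ge0 P G.
have := ler_wpM2l pr0 exp_le; have : 0 <= pr P G * expR L by rewrite mulr_ge0 ?expR_ge0.
have := expR_ge1Dx (1 : R); nra.
Qed.

Lemma column_tail_chernoff (m : nat) (X : 'I_m -> T -> R) (s L : R) :
  0 < s -> (forall i, measurable_fun setT (X i)) ->
  (forall i, is_normal_RV P 0 s (X i)) -> mutually_independent_RVs P X ->
  1/2 <= L -> 1 <= m%:R * L ->
  pr P [set x | s * m%:R + 4 * s * Num.sqrt m%:R * (L * Num.sqrt L)
                < \sum_i `|X i x|] <= expR (- L).
Proof.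
move=> s0 mX nX indep L_ge mL_ge.
have m0 : 0 < m%:R :> R by have := ler0n R m; nra.
have [lam lam_half lam_le] := chernoff_exponent_le _ _ m0 L_ge mL_ge.
set tau := 4 * Num.sqrt m%:R * (L * Num.sqrt L) in lam_le.
set G := [set x | m%:R / 2 + tau < \sum_i X i x ^+ 2 / (s ^+ 2 *+ 2)].
have mG : measurable G.
  apply: measurable_gt_set; apply: measurable_sum => i.
  by apply: measurable_funM => //; exact: measurable_funX.
apply: le_trans (pr_le P _ _ _ mG _) _.
- exact/measurable_gt_set/measurable_sum_normr.
- move=> x /= lt_sum; have := sum_normr_le_sum_sqr _ (X^~ x) _ s0.
  move=> le_sum; rewrite /G /tau /= -(ltr_pM2l s0); lra.
apply: le_trans (chernoff_sum_sqr_tail P _ _ _ s0 mX nX indep _ _ lam_half) _.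
by rewrite ler_expR; lra.
Qed.

Lemma column_l1_tail (m : nat) (X : 'I_m -> T -> R) (s L : R) :
  0 < s -> (forall i, measurable_fun setT (X i)) ->
  (forall i, is_normal_RV P 0 s (X i)) -> mutually_independent_RVs P X -> 0 <= L ->
  pr P [set x | s * m%:R + 4 * s * Num.sqrt m%:R * (L * Num.sqrt L)
                < \sum_i `|X i x|] <= m%:R * expR (- L).
Proof.
move=> s0 mX nX indep L0.
case: m X mX nX indep => [|[|m]] X mX nX indep.
- rewrite (_ : [set x | _ < _] = set0) ?mul0r; first by rewrite /pr measure0.
  by apply/seteqP; split => x //=; rewrite big_ord0 mulr0 sqrtr0 !mulr0 mul0r addr0 ltxx.
- rewrite (_ : [set x | _ < _] = [set x | s + 4 * s * (L * Num.sqrt L) < `|X ord0 x|]).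
    rewrite mul1r; have [L_le|L_gt] := lerP L (2/5).
      by apply: single_tail_small => //; rewrite L0.
    by apply: single_tail_large => //; exact: ltW.
  by apply/seteqP; split => x /=; rewrite big_ord1 sqrtr1 !mulr1.
have m2 : 2 <= m.+2%:R :> R by rewrite ler_nat.
have [L_lt|L_ge] := ltrP L (1/2).
  apply: le_trans (pr_le1 P _ _) _; first exact/measurable_gt_set/measurable_sum_normr.
  have : 59/100 <= expR (- L).
    by apply: le_trans expR_Nhalf_ge _; rewrite ler_expR; lra.
  nra.
apply: le_trans (column_tail_chernoff _ _ _ _ s0 mX nX indep L_ge _) _; first nra.
by rewrite ler_pMl ?expR_gt0 // ler1n.
Qed.

End column_tail.

Section relu_sensitivity.
Context {R : realType}.

Lemma dist_max0_le (u v : R) : `|Num.max u 0 - Num.max v 0| <= `|u - v|.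
Proof.
wlog vu : u v / v <= u.
  move=> wlog_le; have [/wlog_le //|/ltW/wlog_le] := leP v u.
  by rewrite distrC [X in _ <= X]distrC.
rewrite [X in _ <= X]ger0_norm ?subr_ge0 // ler_norml.
by case: (leP u 0) => u0; case: (leP v 0) => v0; apply/andP; split; lra.
Qed.

Lemma relu_layer_l1_dist_le (m d : nat) (A : 'I_m -> 'I_d -> R) (b : 'I_m -> R)
    (x1 x2 : 'I_d -> R) (j0 : 'I_d) :
  (forall j, j != j0 -> x1 j = x2 j) -> `|x1 j0 - x2 j0| <= 1 ->
  l1norm (fun i => relu_layer A b x1 i - relu_layer A b x2 i) <= \sum_i `|A i j0|.
Proof.
move=> x12 dist_le; apply: ler_sum => i _; apply: le_trans (dist_max0_le _ _) _.
rewrite opprD addrACA subrr addr0 -sumrB (bigD1 j0) //= big1 ?addr0 => [|j j_neq].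
  by rewrite -mulrBr normrM ler_piMr.
by rewrite x12 // subrr.
Qed.

Lemma GS1_relu_layer_le (m d : nat) (A : 'I_m -> 'I_d -> R) (b : 'I_m -> R) (c : R) :
  0 <= c -> (forall j, \sum_i `|A i j| <= c) -> GS1 (relu_layer A b) <= c.
Proof.
move=> c0 col_le; apply: ge_sup.
  have cube0 : unit_cube (fun _ : 'I_d => 0 : R) by move=> j; rewrite lexx ler01.
  exists 0, (fun _ => 0), (fun _ => 0); do 2 (split; first exact: cube0); split.
  - by apply/card_le1_eqP => j1 j2; rewrite !inE eqxx.
  - by rewrite /l1norm big1 // => i _; rewrite subrr normr0.
move=> _ [x1 [x2 [cube1 [cube2 [one_diff ->]]]]].
have [[j0 j0_diff]|no_diff] := pselect (exists j0, x1 j0 != x2 j0).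
  apply: le_trans (col_le j0); apply: relu_layer_l1_dist_le.
    move=> j; apply: contraNeq => j_diff; apply/eqP.
    by apply: (card_le1_eqP one_diff); rewrite !inE.
  have /andP[? ?] := cube1 j0; have /andP[? ?] := cube2 j0.
  by rewrite ler_norml; apply/andP; split; lra.
have -> : x1 = x2.
  apply: funext => j; apply/eqP; apply: contraT => j_diff.
  by exfalso; apply: no_diff; exists j.
by rewrite /l1norm big1 // => i _; rewrite subrr normr0.
Qed.

End relu_sensitivity.

Theorem lemmaD2 (R : realType) (dT : measure_display) (T : measurableType dT)
  (P : probability T R) (m d : nat) (sigmaA : R) (A : 'I_m -> 'I_d -> T -> R)
  (b : 'I_m -> R) (delta : R) :
  0 < sigmaA ->
  (forall i j, measurable_fun [set: T] (A i j)) ->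
  (forall i j, is_normal_RV P 0 sigmaA (A i j)) ->
  mutually_independent_RVs P (fun ij : 'I_m * 'I_d => A ij.1 ij.2) ->
  0 < delta < 1 ->
  exists E : set T, measurable E /\
    E `<=` [set w | GS1 (relu_layer (fun i j => A i j w) b)
                    <= sigmaA * m%:R
                       + 4 * sigmaA * Num.sqrt m%:R
                         * powR (ln ((m * d)%:R / delta)) (3 / 2)] /\
    (1 - delta%:E <= P E)%E.
Proof.
move=> s0 mA nA indep /andP[delta0 delta1].
set L := ln _; have L0 : 0 <= L.
  have [md0|md_gt0] := posnP (m * d); first by rewrite /L md0 mul0r ln0.
  by apply: ln_ge0; rewrite ler_pdivlMr // mul1r (le_trans (ltW delta1)) // ler1n.
rewrite powR32 //; set c := _ + _.
pose bad j := [set w | c < \sum_i `|A i j w|].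
have mbad j : measurable (bad j) by exact/measurable_gt_set/measurable_sum_normr.
have mbad_all : measurable (\bigcup_(j in [set: 'I_d]) bad j).
  by apply: fin_bigcup_measurable => //; exact: finite_setT.
exists (~` \bigcup_(j in [set: 'I_d]) bad j); split; first exact: measurableC.
split.
  move=> w /= not_bad; apply: GS1_relu_layer_le => [|j].
    by rewrite /c addr_ge0 ?mulr_ge0 ?sqrtr_ge0 ?ler0n // ltW.
  by rewrite leNgt; apply/negP => bad_j; apply: not_bad; exists j.
have bad_le j : pr P (bad j) <= delta / d%:R.
  have d_gt0 : (0 < d)%N by apply: leq_ltn_trans (ltn_ord j).
  apply: le_trans (natr_mul_expR_Nln m d delta delta0 d_gt0).
  exact: (column_l1_tail P _ _ _ _ s0 (mA^~ j) (nA^~ j)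
    (mutually_independent_RVs_col P _ _ _ j indep) L0).
rewrite (prE P _ (measurableC mbad_all)) prC // lee_fin lerD2l lerN2.
apply: le_trans (pr_bigcup_le P _ _ mbad) _.
apply: le_trans (ler_sum _ (fun j _ => bad_le j)) _.
rewrite sumr_const card_ord; have [->|d_gt0] := posnP d; first exact: ltW.
by rewrite -[_ *+ d]mulr_natr divfK // pnatr_eq0 -lt0n.
Qed.
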